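(* There is a deterministic Congested Clique algorithm which, on an input graph $G$ with arboricity $a\ge 2$, terminates within $O(a)$ rounds with every vertex knowing the entire edge set of $G$. Consequently, every problem whose solution is a computable function of the (unweighted) input graph $G$ can be solved deterministically in $O(a)$ rounds in the Congested Clique, with each vertex outputting its part of a common solution.
   Context: Congested Clique model: there are $n$ processors (vertices) with distinct IDs of $O(\log n)$ bits; computation proceeds in synchronous rounds; in each round every pair of vertices may exchange a message of $O(\log n)$ bits; local computation is unrestricted. The input is a graph $G=(V,E')$ on the same vertex set; each vertex initially knows its incident edges in $G$, and $a$ is known to all vertices. The arboricity of a graph is the minimum number of forests whose union covers its edge set. *)

From mathcomp Require Import all_boot.

Set Implicit Arguments. Unset Strict Implicit. Unset Printing Implicit Defensive.

Definition simple_graph n (E : rel 'I_n) : Prop :=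
  (forall u v, E u v = E v u) /\ (forall v, E v v = false).

Definition forest n (F : rel 'I_n) : Prop :=
  (forall u v, F u v = F v u) /\
  forall c : seq 'I_n, uniq c -> 2 < size c -> ~~ cycle F c.

Definition covered_by_forests n (E : rel 'I_n) (k : nat) : Prop :=
  exists F : 'I_k -> rel 'I_n,
    (forall i, forest (F i)) /\
    (forall i u v, F i u v -> E u v) /\
    (forall u v, E u v -> exists i, F i u v).

Definition arboricity n (E : rel 'I_n) (a : nat) : Prop :=
  covered_by_forests E a /\ (forall k, covered_by_forests E k -> a <= k).

(* A deterministic Congested Clique algorithm, for each number of vertices n
   and each (globally known) value a: a local state type, an initial state
   computed from the vertex's own ID and its incident edges (neighbour set),
   a message function (message from the vertex in state s to vertex w, a bit
   string), and a state update from the messages received from all vertices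
   (indexed by sender ID).  Local computation is unrestricted. *)
Record CCAlgo := {
  st   : nat -> nat -> Type;
  init : forall n a, 'I_n -> {set 'I_n} -> st n a;
  msg  : forall n a, 'I_n -> st n a -> 'I_n -> seq bool;
  upd  : forall n a, 'I_n -> st n a -> ('I_n -> seq bool) -> st n a
}.

(* Messages have O(log n) bits: at most B * (floor(log2 n) + 1) bits. *)
Definition msg_bounded (A : CCAlgo) (B : nat) : Prop :=
  forall n a (v : 'I_n) (s : st A n a) (w : 'I_n),
    size (@msg A n a v s w) <= B * (trunc_log 2 n).+1.

Fixpoint run (A : CCAlgo) n (E : rel 'I_n) (a : nat) (t : nat) : 'I_n -> st A n a :=
  match t with
  | 0 => fun v => @init A n a v [set u | E v u]
  | t'.+1 =>
      let s := run A E a t' in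
      fun v => @upd A n a v (s v) (fun u => @msg A n a u (s u) v)
  end.

From mathcomp Require Import all_boot.
From mathcomp Require Import zify.
From Stdlib Require Import FunctionalExtensionality.
Set Implicit Arguments. Unset Strict Implicit. Unset Printing Implicit Defensive.

(* Every nonempty vertex set of a forest contains a vertex with at most one
   neighbour inside it (otherwise a non-backtracking walk would close a cycle),
   so a forest contributes at most 2m to the degree sum of m vertices, and a
   graph of arboricity a has at most 2an directed edges.
   The algorithm: in round 1 every vertex broadcasts its degree, which numbers
   the directed edges globally, the edges of v being offset(v), ...,
   offset(v) + deg(v) - 1. In round 2 every vertex v sends its edge number k to
   vertex k mod n; as deg(v) <= n, v sends at most one edge to each vertex.
   From round 3 on, vertex r broadcasts edge r + tn in round t + 3, so 2a such
   rounds make all edges known, within 3a rounds for a >= 2. Every message is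
   at most two vertex IDs, i.e. O(log n) bits. *)

Section ForestDegrees.
Variables (n : nat) (F : rel 'I_n).
Hypothesis forestF : forest F.

Definition adj (u w : 'I_n) : bool := (w != u) && F u w.

Definition deg_in (S : {set 'I_n}) (x : 'I_n) : nat := \sum_(w in S) adj x w.

Lemma adjC u w : adj u w = adj w u.
Proof. by rewrite /adj eq_sym (proj1 forestF). Qed.

Section NonBacktrackingWalk.
Variable S : {set 'I_n}.
Hypothesis deg_in_gt1 : forall x, x \in S -> 1 < deg_in S x.

Lemma exists_fresh_neighbour x p :
  x \in S -> exists w, [&& w \in S, w != x, w != p & F x w].
Proof.
move=> xS; apply/existsP; apply: contraLR (deg_in_gt1 xS).
rewrite negb_exists => /forallP noW; rewrite -leqNgt.
apply: (@leq_trans (\sum_(w in S) (w == p))).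
  apply: leq_sum => w wS; move: (noW w); rewrite wS /adj /=.
  by case: (w =P x) => //= _; case: (w =P p) => //= _; case: (F x w).
rewrite (big_mkcond (fun w => w \in S)) (bigD1 p) //= big1 ?addn0.
  by rewrite eqxx; case: (p \in S).
by move=> w /negbTE ->; case: (w \in S).
Qed.

Definition walk_next (p x : 'I_n) : 'I_n :=
  odflt x [pick w | [&& w \in S, w != x, w != p & F x w]].

Lemma walk_nextP p x : x \in S ->
  let w := walk_next p x in [&& w \in S, w != x, w != p & F x w].
Proof.
move=> xS /=; rewrite /walk_next; case: pickP => [w -> //|noW].
by have [w Hw] := exists_fresh_neighbour p xS; move: (noW w); rewrite Hw.
Qed.

Variable x0 : 'I_n.
Hypothesis x0S : x0 \in S.

Definition walk_state k : 'I_n * 'I_n :=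
  iter k (fun pc => (pc.2, walk_next pc.1 pc.2)) (x0, x0).

Definition walk k : 'I_n := (walk_state k).2.

Lemma walk_in k : walk k \in S.
Proof. by elim: k => // k IH; have /and4P[] := walk_nextP (walk_state k).1 IH. Qed.

Lemma walk_step k : [&& walk k.+1 != walk k, walk k.+2 != walk k & F (walk k) (walk k.+1)].
Proof.
have /and4P[_ ne1 _ Fk] := walk_nextP (walk_state k).1 (walk_in k).
by have /and4P[_ _ ne2 _] := walk_nextP (walk_state k.+1).1 (walk_in k.+1); rewrite ne1 ne2.
Qed.

Lemma walk_path i m : path F (walk i) [seq walk l | l <- iota i.+1 m].
Proof. by elim: m i => [|m IH] i //=; rewrite IH; case/and3P: (walk_step i) => _ _ ->. Qed.

Lemma walk_closes_cycle i m :
  walk (i + m) = walk i -> cycle F [seq walk l | l <- iota i m].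
Proof.
case: m => [|m] // close; rewrite /= -cats1.
have -> : [:: walk i] = [seq walk l | l <- iota (i.+1 + m) 1] by rewrite /= -close addSnnS.
by rewrite -map_cat -iotaD walk_path.
Qed.

Lemma walk_not_uniq : ~~ uniq [seq walk l | l <- iota 0 n.+1].
Proof.
apply/negP => /uniq_leq_size /(_ (fun x _ => mem_enum _ x)).
by rewrite size_map size_iota size_enum_ord ltnn.
Qed.

Lemma no_nonbacktracking_walk : False.
Proof.
have rep : exists j, ~~ uniq [seq walk l | l <- iota 0 j.+1] by exists n; apply: walk_not_uniq.
case: (ex_minnP rep) => j; rewrite -addn1 iotaD map_cat cats1 rcons_uniq.
rewrite negb_and negbK => notuniq minj.
have uniq_j : uniq [seq walk l | l <- iota 0 j].
  case: j notuniq minj => [|j] // _ minj; apply/negPn/negP => /minj; lia.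
move: notuniq; rewrite uniq_j orbF => /mapP [i]; rewrite mem_iota add0n => ij close.
set c := [seq walk l | l <- iota i (j - i)].
have c_drop : c = drop i [seq walk l | l <- iota 0 j] by rewrite -map_drop drop_iota.
have c_uniq : uniq c by rewrite c_drop drop_uniq.
have c_size : 2 < size c.
  rewrite size_map size_iota.
  case/and3P: (walk_step i) => ne1 ne2 _.
  case: (j - i) (subnKC (ltnW ij)) => [|[|[|m]]] // jE; try lia.
  - by move: ne1; rewrite -addn1 jE close eqxx.
  - by move: ne2; rewrite -addn2 jE close eqxx.
have c_cycle : cycle F c by apply: walk_closes_cycle; rewrite subnKC // ltnW.
by case/negP: (proj2 forestF c c_uniq c_size).
Qed.

End NonBacktrackingWalk.

Lemma forest_leaf (S : {set 'I_n}) x0 :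
  x0 \in S -> exists2 x, x \in S & deg_in S x <= 1.
Proof.
move=> x0S; have [/exists_inP [x xS leaf]|] := boolP [exists x in S, deg_in S x <= 1].
  by exists x.
rewrite negb_exists_in => /forall_inP noleaf; exfalso.
by apply: (no_nonbacktracking_walk _ x0S) => x /noleaf; rewrite -ltnNge.
Qed.

Lemma forest_deg_sum (S : {set 'I_n}) : \sum_(u in S) deg_in S u <= 2 * #|S|.
Proof.
elim: {S}#|S| {-2}S (erefl #|S|) => [|k IH] S cardS.
  by move/cards0_eq: cardS => ->; rewrite big_set0.
have [x0 x0S] : exists x, x \in S by apply/set0Pn; rewrite -card_gt0 cardS.
have [x xS leaf] := forest_leaf x0S.
have cardSx : #|S :\ x| = k by move: cardS; rewrite (cardsD1 x) xS add1n => [[]].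
rewrite (big_setD1 _ xS) /=.
under eq_bigr => u _ do rewrite /deg_in (big_setD1 _ xS).
rewrite big_split /= cardS mulnS addnA leq_add //; last by rewrite -cardSx IH.
rewrite -[2]/(1 + 1) leq_add // (leq_trans _ leaf) // /deg_in (big_setD1 _ xS) /=.
by apply: leq_trans (leq_addl _ _); under eq_bigr => u _ do rewrite adjC.
Qed.

End ForestDegrees.

Lemma covered_by_forests_deg_sum n (E : rel 'I_n) k : (forall v, E v v = false) ->
  covered_by_forests E k -> \sum_u #|[set w | E u w]| <= 2 * k * n.
Proof.
move=> irrE [Fs [forestFs [_ coverE]]].
have sumT f : \sum_(u in [set: 'I_n]) f u = \sum_u f u by apply: eq_bigl => u; rewrite in_setT.
have deg_le u : #|[set w | E u w]| <= \sum_(i < k) deg_in (Fs i) [set: 'I_n] u.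
  rewrite /deg_in exchange_big sumT -sum1_card big_mkcond /=.
  apply: leq_sum => w _; rewrite inE; case Euw: (E u w) => //.
  have [i Fi] := coverE _ _ Euw.
  rewrite (bigD1 i) //= /adj Fi andbT -[1]addn0 leq_add //.
  by rewrite lt0b; apply/eqP => wu; move: Euw; rewrite wu irrE.
apply: (@leq_trans (\sum_(i < k) \sum_(u in [set: 'I_n]) deg_in (Fs i) [set: 'I_n] u)).
  by rewrite exchange_big sumT; apply: leq_sum => u _.
apply: (@leq_trans (\sum_(i < k) 2 * #|[set: 'I_n]|)).
  by apply: leq_sum => i _; apply: forest_deg_sum.
by rewrite sum_nat_const card_ord cardsT card_ord; lia.
Qed.

Definition id_bits n := (trunc_log 2 n).+1.

Lemma ltn_exp2_id_bits n : n < 2 ^ id_bits n.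
Proof. exact: trunc_log_ltn. Qed.

Fixpoint bits_of (l k : nat) : seq bool :=
  if l is l'.+1 then odd k :: bits_of l' k./2 else [::].

Fixpoint nat_of_bits (s : seq bool) : nat :=
  if s is b :: s' then b + (nat_of_bits s').*2 else 0.

Lemma size_bits_of l k : size (bits_of l k) = l.
Proof. by elim: l k => //= l IH k; rewrite IH. Qed.

Lemma bits_ofK l k : k < 2 ^ l -> nat_of_bits (bits_of l k) = k.
Proof.
elim: l k => [|l IH] k /=; first by case: k.
rewrite expnS => lt_k; rewrite IH ?odd_double_half //.
by rewrite -ltn_double -!muln2; lia.
Qed.

Definition ord_of_bits n (s : seq bool) : option 'I_n := insub (nat_of_bits s).

Definition pair_of_bits n (s : seq bool) : option ('I_n * 'I_n) :=
  if s is [::] then None else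
  match ord_of_bits n (take (id_bits n) s), ord_of_bits n (drop (id_bits n) s) with
  | Some x, Some y => Some (x, y) | _, _ => None end.

Lemma ord_of_bitsK n (v : 'I_n) : ord_of_bits n (bits_of (id_bits n) v) = Some v.
Proof.
by rewrite /ord_of_bits bits_ofK ?valK // (leq_trans (ltn_ord v)) // ltnW // ltn_exp2_id_bits.
Qed.

Lemma pair_of_bitsK n (x y : 'I_n) :
  pair_of_bits n (bits_of (id_bits n) x ++ bits_of (id_bits n) y) = Some (x, y).
Proof.
rewrite /pair_of_bits take_size_cat ?size_bits_of // drop_size_cat ?size_bits_of //.
by rewrite !ord_of_bitsK; case: (bits_of _ x).
Qed.

Definition offset n (d : 'I_n -> nat) (v : 'I_n) : nat := \sum_(u : 'I_n | u < v) d u.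

Definition edge_owner n (d : 'I_n -> nat) (k : nat) : option 'I_n :=
  [pick v : 'I_n | offset d v <= k < offset d v + d v].

Definition edge_slot n (d : 'I_n -> nat) (v r : 'I_n) : option 'I_n :=
  [pick i : 'I_n | (i < d v) && ((offset d v + i) %% n == r)].

Lemma offset_mono n (d : 'I_n -> nat) (u v : 'I_n) : u < v -> offset d u + d u <= offset d v.
Proof.
move=> uv; rewrite /offset !(big_mkcond (fun w : 'I_n => w < _)) /=.
have -> : \sum_(w < n) (if w < v then d w else 0) =
    \sum_(w < n) ((if w < u then d w else 0) + (if u <= w < v then d w else 0)).
  apply: eq_bigr => w _; case: (ltnP w u) => wu /=.
    by rewrite (ltn_trans wu uv) addn0.
  by case: (w < v).
by rewrite big_split /= leq_add2l (bigD1 u) //= leqnn uv leq_addr.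
Qed.

Lemma offset_le_sum n (d : 'I_n -> nat) (v : 'I_n) : offset d v + d v <= \sum_u d u.
Proof.
rewrite /offset [X in _ <= X](bigD1 v) //= addnC leq_add2l.
rewrite (big_mkcond (fun w : 'I_n => w < v)) (big_mkcond (fun w : 'I_n => w != v)) /=.
apply: leq_sum => w _.
by case: (ltngtP w v) => [wv|wv|/val_inj ->]; rewrite ?eqxx ?ltnn // neq_ltn wv ?orbT.
Qed.

Lemma edge_ownerE n (d : 'I_n -> nat) x k :
  offset d x <= k < offset d x + d x -> edge_owner d k = Some x.
Proof.
move=> /andP [lo hi]; rewrite /edge_owner; case: pickP => [o /andP [lo' hi']|none].
  case: (ltngtP o x) => [ox|xo|/val_inj -> //].
    by have := offset_mono d ox; lia.
  by have := offset_mono d xo; lia.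
by move: (none x); rewrite lo hi.
Qed.

Lemma edge_slotE n (d : 'I_n -> nat) x (i : 'I_n) (n_gt0 : 0 < n) :
  i < d x -> edge_slot d x (Ordinal (ltn_pmod (offset d x + i) n_gt0)) = Some i.
Proof.
move=> ltid; rewrite /edge_slot; case: pickP => [j /andP [ltjd /eqP eq_mod]|none].
  congr Some; apply: val_inj => /=.
  have : offset d x + j == offset d x + i %[mod n] by rewrite eq_mod.
  by rewrite eqn_modDl !modn_small // => /eqP.
by move: (none i); rewrite ltid eqxx.
Qed.

(* The local state of the gathering algorithm: after round 1 [degs] holds all
   degrees; after round 2 [routed u] is the neighbour of [u] sitting in the
   edge slot routed to this vertex; from round 3 on, [known] accumulates the
   broadcast edges. *)
Record gather_state n := GatherState {
  self : 'I_n; nbhd : {set 'I_n}; clock : nat;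
  degs : 'I_n -> nat; routed : 'I_n -> option 'I_n; known : rel 'I_n }.

Definition gather_msg n (a : nat) (v : 'I_n) (s : gather_state n) (w : 'I_n) : seq bool :=
  match clock s with
  | 0 => bits_of (id_bits n) #|nbhd s|
  | 1 => if edge_slot (degs s) v w is Some i
         then bits_of (id_bits n) (nth v (enum (nbhd s)) i) else [::]
  | t.+2 => if edge_owner (degs s) (v + t * n) is Some o then
              if routed s o is Some x
              then bits_of (id_bits n) o ++ bits_of (id_bits n) x else [::]
            else [::]
  end.

Definition gather_upd n (a : nat) (v : 'I_n) (s : gather_state n)
    (m : 'I_n -> seq bool) : gather_state n :=
  match clock s with
  | 0 => GatherState (self s) (nbhd s) 1 (fun u => nat_of_bits (m u)) (routed s) (known s)
  | 1 => GatherState (self s) (nbhd s) 2 (degs s)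
           (fun u => if m u is [::] then None else ord_of_bits n (m u)) (known s)
  | t.+2 => GatherState (self s) (nbhd s) t.+3 (degs s) (routed s)
           (fun x y => known s x y || [exists u, pair_of_bits n (m u) == Some (x, y)])
  end.

Definition gather : CCAlgo :=
  {| st := fun n _ => gather_state n;
     init := fun n a v N =>
       GatherState v N 0 (fun _ => 0) (fun _ => None) (fun _ _ => false);
     msg := gather_msg; upd := gather_upd |}.

Lemma gather_msg_bounded : msg_bounded gather 2.
Proof.
move=> n a v s w /=; rewrite /gather_msg mul2n -addnn.
case: (clock s) => [|[|t]]; first by rewrite size_bits_of leq_addr.
  by case: edge_slot => [i|]; rewrite ?size_bits_of ?leq_addr.
case: edge_owner => [o|] //; case: routed => [x|] //.
by rewrite size_cat !size_bits_of.
Qed.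

Section GatherRun.
Variables (n : nat) (E : rel 'I_n) (a : nat).
Notation state t := (run gather E a t).

Definition deg (u : 'I_n) : nat := #|[set w | E u w]|.

Definition routed_edge (r u : 'I_n) : option 'I_n :=
  omap (fun i : 'I_n => nth u (enum [set w | E u w]) i) (edge_slot deg u r).

Definition broadcast_edge (t : nat) (r : 'I_n) : option ('I_n * 'I_n) :=
  obind (fun o => omap (pair o) (routed_edge r o)) (edge_owner deg (r + t * n)).

Lemma gather_run_static t v :
  [/\ self (state t v) = v, nbhd (state t v) = [set w | E v w] & clock (state t v) = t].
Proof.
elim: t v => [|t IH] v //=; have [self_v nbhd_v clock_v] := IH v.
by rewrite /gather_upd clock_v; case: t {IH} self_v nbhd_v clock_v => [|[|t]].
Qed.

Lemma gather_run_self t v : self (state t v) = v.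
Proof. by case: (gather_run_static t v). Qed.

Lemma gather_run_nbhd t v : nbhd (state t v) = [set w | E v w].
Proof. by case: (gather_run_static t v). Qed.

Lemma gather_run_clock t v : clock (state t v) = t.
Proof. by case: (gather_run_static t v). Qed.

Lemma gather_runS t v :
  state t.+1 v = gather_upd a v (state t v) (fun u => gather_msg a u (state t u) v).
Proof. by []. Qed.

Lemma gather_upd_degs v s m : 0 < clock s -> degs (@gather_upd n a v s m) = degs s.
Proof. by rewrite /gather_upd; case: (clock s) => [|[|t]]. Qed.

Lemma gather_upd_routed v s m : 1 < clock s -> routed (@gather_upd n a v s m) = routed s.
Proof. by rewrite /gather_upd; case: (clock s) => [|[|t]]. Qed.

Lemma gather_run_degs t v : degs (state t.+1 v) = deg.
Proof.
elim: t v => [|t IH] v; last by rewrite gather_runS gather_upd_degs ?gather_run_clock.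
apply: functional_extensionality => u.
change (nat_of_bits (bits_of (id_bits n) (deg u)) = deg u).
rewrite bits_ofK // (leq_ltn_trans _ (ltn_exp2_id_bits n)) //.
by rewrite -[n]card_ord max_card.
Qed.

Lemma gather_run_routed t r : routed (state t.+2 r) = routed_edge r.
Proof.
elim: t r => [|t IH] r; last by rewrite gather_runS gather_upd_routed ?gather_run_clock.
apply: functional_extensionality => u.
change ((if gather_msg a u (state 1 u) r is [::] then None
         else ord_of_bits n (gather_msg a u (state 1 u) r)) = routed_edge r u).
rewrite /gather_msg gather_run_clock gather_run_degs gather_run_nbhd /routed_edge.
case: (edge_slot deg u r) => [i|] //=; rewrite ord_of_bitsK.
by case: (bits_of _ _) (size_bits_of (id_bits n) (nth u (enum [set w | E u w]) i)).
Qed.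

Lemma gather_run_known_early t v : t <= 2 -> known (state t v) =2 (fun _ _ => false).
Proof. by case: t => [|[|[|t]]]. Qed.

Lemma gather_run_knownS t v x y :
  known (state t.+3 v) x y =
  known (state t.+2 v) x y || [exists r, broadcast_edge t r == Some (x, y)].
Proof.
rewrite (gather_runS t.+2 v) /gather_upd (gather_run_clock t.+2 v).
change ((known (state t.+2 v) x y ||
  [exists u, pair_of_bits n (gather_msg a u (state t.+2 u) v) == Some (x, y)]) =
  known (state t.+2 v) x y || [exists r, broadcast_edge t r == Some (x, y)]).
congr (_ || _); apply: eq_existsb => r.
rewrite /gather_msg (gather_run_clock t.+2 r) gather_run_degs /broadcast_edge.
case: edge_owner => [o|] //=; rewrite gather_run_routed.
by case: (routed_edge r o) => [w|] //; rewrite pair_of_bitsK.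
Qed.

Lemma routed_edge_sound r u w : routed_edge r u = Some w -> E u w.
Proof.
rewrite /routed_edge /edge_slot; case: pickP => [i /andP [lt_i _]|_] //= [<-].
have : nth u (enum [set w | E u w]) i \in enum [set w | E u w] by rewrite mem_nth // -cardE.
by rewrite mem_enum inE.
Qed.

Lemma broadcast_edge_sound t r x y : broadcast_edge t r = Some (x, y) -> E x y.
Proof.
rewrite /broadcast_edge; case: edge_owner => [o|] //=.
by case E_o: routed_edge => [w|] //= [<- <-]; apply: routed_edge_sound E_o.
Qed.

Lemma broadcast_edge_complete x y : E x y ->
  exists t r, t * n < \sum_u deg u /\ broadcast_edge t r = Some (x, y).
Proof.
move=> Exy; have n_gt0 : 0 < n by case: n x {Exy} => [[]|].
have y_nbhd : y \in enum [set w | E x w] by rewrite mem_enum inE.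
set i := index y (enum [set w | E x w]).
have lt_i_deg : i < deg x by rewrite /deg cardE index_mem.
have lt_i_n : i < n by rewrite (leq_trans lt_i_deg) // -[n]card_ord max_card.
set k := offset deg x + i.
exists (k %/ n), (Ordinal (ltn_pmod k n_gt0)); split.
  apply: leq_ltn_trans (leq_divM k n) _.
  by rewrite (leq_trans _ (offset_le_sum deg x)) // ltn_add2l.
rewrite /broadcast_edge /= addnC -divn_eq (@edge_ownerE _ _ x) /= ?leq_addr ?ltn_add2l //.
by rewrite /routed_edge (@edge_slotE _ _ x (Ordinal lt_i_n)) //= nth_index.
Qed.

Lemma gather_known_sound t v x y : known (state t v) x y -> E x y.
Proof.
elim: t v => [|[|[|t]] IH] v; try by rewrite gather_run_known_early.
by rewrite gather_run_knownS => /orP [/IH //|/existsP [r /eqP]]; apply: broadcast_edge_sound.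
Qed.

Lemma gather_known_mono s t v x y : s <= t -> known (state s v) x y -> known (state t v) x y.
Proof.
move=> /subnKC <-; elim: (t - s) => [|m IH]; first by rewrite addn0.
move=> known_s; rewrite addnS; move: (IH known_s).
case: (s + m) => [|[|u]] known_u; try by move: known_u; rewrite gather_run_known_early.
by rewrite gather_run_knownS known_u.
Qed.

Lemma gather_known_complete t v x y : \sum_u deg u <= t * n -> E x y -> known (state t.+2 v) x y.
Proof.
move=> sum_deg /broadcast_edge_complete [s [r [lt_s bc_s]]].
apply: (@gather_known_mono s.+3).
  by move: (leq_trans lt_s sum_deg); rewrite ltn_mul2r => /andP [].
by rewrite gather_run_knownS; apply/orP; right; apply/existsP; exists r; rewrite bc_s.
Qed.

End GatherRun.

Lemma gather_known n (E : rel 'I_n) a v : simple_graph E -> arboricity E a -> 2 <= a ->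
  known (run gather E a (3 * a) v) =2 E.
Proof.
move=> [_ irrE] [coverE _] a_ge2 x y; apply/idP/idP; first exact: gather_known_sound.
have -> : 3 * a = (3 * a - 2).+2 by lia.
apply: gather_known_complete; apply: leq_trans (covered_by_forests_deg_sum irrE coverE) _.
by rewrite leq_mul2r; apply/orP; right; lia.
Qed.

Theorem mainTheorem7 :
  (exists (A : CCAlgo) (B C : nat)
          (dec : forall n a, st A n a -> rel 'I_n),
     msg_bounded A B /\
     forall n (E : rel 'I_n) (a : nat),
       simple_graph E -> arboricity E a -> 2 <= a ->
       forall v x y, dec n a (run A E a (C * a) v) x y = E x y)
  /\
  (forall (Out : Type) (g : forall n, rel 'I_n -> 'I_n -> Out),
     exists (A : CCAlgo) (B C : nat) (out : forall n a, st A n a -> Out),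
       msg_bounded A B /\
       forall n (E : rel 'I_n) (a : nat),
         simple_graph E -> arboricity E a -> 2 <= a ->
         forall v, out n a (run A E a (C * a) v) = g n E v).
Proof.
split.
  exists gather, 2, 3, (fun n a (s : gather_state n) => known s).
  by split; [exact: gather_msg_bounded | move=> *; apply: gather_known].
move=> Out g.
exists gather, 2, 3, (fun n a (s : gather_state n) => g n (known s) (self s)).
split=> [|n E a simpleE arbE a_ge2 v]; first exact: gather_msg_bounded.
have -> : known (run gather E a (3 * a) v) = E.
  by do 2!apply: functional_extensionality => ?; apply: gather_known.
by rewrite gather_run_self.
Qed.
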